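(* Let a countable group $G$ act on a set $X$, let $\Phi=(\ell,\phi,\mathcal{Z},\Gamma,\mathcal{H})$ be a chart for $G$, let $0<\epsilon<\tfrac12$, let $A\subseteq\mathbb{Z}^\ell\times\Gamma$ be a rectangle, let $R\subseteq X$ be $(\Phi,\epsilon)$-roughly $A$ at $x\in X^{\mathcal{H}}$, and let $M$ be a positive integer with $(M+2)\cdot A+4\cdot\mathcal{Z}\subseteq\mathrm{dom}(\phi)$. Let $y\in X^{\mathcal{H}}$. (i) If $y=\phi(u)\cdot x$ with $u\in M\cdot A$, then $R$ is $(\Phi,2\epsilon)$-roughly $A-u$ at $y$. (ii) If $x=\phi(v)\cdot y$ with $-v\in M\cdot A$, then $R$ is $(\Phi,2\epsilon)$-roughly $A+v$ at $y$.
   Context: Rectangles: Let $\Gamma$ be a finite additive abelian group with identity $0_\Gamma$ and $\ell\in\mathbb{N}$. Elements $v$ of $\mathbb{R}^\ell\times\Gamma$ have coordinates $v_1,\dots,v_\ell\in\mathbb{R}$, $v_{\ell+1}\in\Gamma$; $\mathbf{0}$ has first $\ell$ coordinates $0$ and last coordinate $0_\Gamma$. For $\lambda\in\mathbb{R}$, $\lambda\cdot v=(\lambda v_1,\dots,\lambda v_\ell,v_{\ell+1})$. For $a\in\mathbb{R}^\ell\times\Gamma$ let $\mathrm{Rec}(a)=\{b\in\mathbb{Z}^\ell\times\Gamma: -|a_i|\le b_i\le|a_i|,\ 1\le i\le\ell\}$. A rectangle is a set $c+\mathrm{Rec}(a)$ with $c,a\in\mathbb{Z}^\ell\times\Gamma$;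 it can be written uniquely with $c\in\mathbb{Z}^\ell\times\{0_\Gamma\}$ (center) and $a\in\mathbb{N}^\ell\times\{0_\Gamma\}$ (radius vector $\mathrm{L}(A)$, entries $\mathrm{L}_i(A)$). Centered means center $\mathbf{0}$. $A\sqsubseteq B$ means $\mathrm{L}_i(A)\le\mathrm{L}_i(B)$ for all $i$. For $\lambda>0$, $\lambda\cdot A=c+\mathrm{Rec}(\lambda\cdot\mathrm{L}(A))$ with $c$ the center of $A$. Sums of sets/vectors are elementwise. Charts: a chart for $G$ is $\Phi=(\ell,\phi,\mathcal{Z},\Gamma,\mathcal{H})$ with $\mathcal{H}$ a finite collection of pairwise conjugate subgroups of $G$, $\Gamma$ finite abelian, $\mathcal{Z}$ a centered rectangle with all $\mathrm{L}_i(\mathcal{Z})>0$, $\phi$ an injective map into $G$ with $\mathrm{dom}(\phi)$ a centered rectangle containing $3\cdot\mathcal{Z}$, $\phi(\mathbf{0})=1_G$, and for all $r,s\in\mathrm{dom}(\phi)$, $H\in\mathcal{H}$: $\phi(r)H=\phi(s)H\Rightarrow r=s$; $r+s+\mathcal{Z}\subseteq\mathrm{dom}(\phi)\Rightarrow\exists z\in\mathcal{Z}:\phi(r)\phi(s)H=\phi(r+s+z)H$; $r-s+\mathcal{Z}\subseteq\mathrm{dom}(\phi)\Rightarrow\exists z\in\mathcal{Z}:\phi(r)\phi(s)^{-1}H=\phi(r-s+z)H$; $-r+s+\mathcal{Z}\subseteq\mathrm{dom}(\phi)\Rightarrow\exists z\in\mathcal{Z}:\phi(r)^{-1}\phi(s)H=\phi(-r+s+z)H$;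 $-s+\mathcal{Z}\subseteq\mathrm{dom}(\phi)\Rightarrow\exists z\in\mathcal{Z}:\phi(s)^{-1}H=\phi(-s+z)H$. For $S\subseteq\mathrm{dom}(\phi)$, $\phi(S)\cdot x=\{\phi(s)\cdot x:s\in S\}$. $X^{\mathcal{H}}=\{x\in X:\mathrm{Stab}(x)\in\mathcal{H}\}$. Rough rectangles: for a rectangle $A$ with $2\cdot A\subseteq\mathrm{dom}(\phi)$, $x\in X^{\mathcal{H}}$ and $0<\epsilon<1$, a set $R\subseteq X$ is $(\Phi,\epsilon)$-roughly $A$ at $x$ if $2\cdot\mathcal{Z}\sqsubseteq\epsilon\cdot A$ and $\phi((1-\epsilon)\cdot A)\cdot x\subseteq R\subseteq\phi((1+\epsilon)\cdot A)\cdot x$. *)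

From HB Require Import structures.
From mathcomp Require Import all_boot all_order all_algebra.
From mathcomp Require Import reals.
Set Implicit Arguments. Unset Strict Implicit. Unset Printing Implicit Defensive.
Import Order.TTheory GRing.Theory Num.Theory.
Local Open Scope ring_scope.

Record group_on (G : Type) := GroupOn {
  gmul : G -> G -> G;
  ginv : G -> G;
  gone : G;
  gmulA : forall a b c, gmul a (gmul b c) = gmul (gmul a b) c;
  gmul1 : forall a, gmul gone a = a;
  gmulV : forall a, gmul (ginv a) a = gone }.

Definition countable_type (G : Type) := exists f : G -> nat, injective f.

Record action_on (G : Type) (gG : group_on G) (X : Type) := ActionOn {
  act : G -> X -> X;
  act1 : forall x, act (gone gG) x = x;
  actM : forall g h x, act (gmul gG g h) x = act g (act h x) }.

Definition is_subgroup G (gG : group_on G) (H : G -> Prop) :=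
  [/\ H (gone gG), (forall a b, H a -> H b -> H (gmul gG a b))
    & (forall a, H a -> H (ginv gG a))].

Definition conjugate_subgroups G (gG : group_on G) (H K : G -> Prop) :=
  exists g, forall k, K k <-> H (gmul gG g (gmul gG k (ginv gG g))).

Definition coset_eq G (gG : group_on G) (H : G -> Prop) (a b : G) :=
  H (gmul gG (ginv gG b) a).

Definition stabilizer G (gG : group_on G) X (ac : action_on gG X) (x : X) :=
  fun g => act ac g x = x.

Notation vec l Gam := ({ffun 'I_l -> int} * Gam)%type.

(** A rectangle c + Rec(a), written uniquely with center c in Z^l x {0}
    and radius vector L(A) in N^l x {0}. *)
Record rect (l : nat) := Rect { rc : {ffun 'I_l -> int}; rL : 'I_l -> nat }.

(** the set  lam . A = c + Rec(lam . L(A))  (for lam = 1 this is A itself) *)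
Definition scaled_set (R : realType) l (Gam : finZmodType) (lam : R) (A : rect l)
  : vec l Gam -> Prop :=
  fun b => forall i, ((`|b.1 i - rc A i|)%:~R : R) <= `|lam * (rL A i)%:R|.

Definition rect_set l (Gam : finZmodType) (A : rect l) : vec l Gam -> Prop :=
  fun b => forall i, `|b.1 i - rc A i| <= (rL A i)%:Z.

Definition rect_shift l (Gam : finZmodType) (A : rect l) (w : vec l Gam) : rect l :=
  Rect (rc A + w.1) (rL A).

Definition centered_rect l (L : 'I_l -> nat) : rect l := Rect 0 L.

Record chart (G : Type) (l : nat) (Gam : finZmodType) := Chart {
  phi : vec l Gam -> G;
  LZ : 'I_l -> nat;        (* radius vector of the centered rectangle Z *)
  Ldom : 'I_l -> nat;      (* radius vector of the centered rectangle dom(phi) *)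
  nH : nat;
  Hs : 'I_nH -> (G -> Prop) }.
Arguments Hs {G l Gam} c _ _.

Section ChartDefs.
Variables (G : Type) (gG : group_on G) (l : nat) (Gam : finZmodType).
Variable (Ch : chart G l Gam).

Definition Zset : vec l Gam -> Prop := rect_set (centered_rect (LZ Ch)).
Definition domset : vec l Gam -> Prop := rect_set (centered_rect (Ldom Ch)).

Definition is_chart :=
  [/\ (forall j, is_subgroup gG (Hs Ch j)),
      (forall j k, conjugate_subgroups gG (Hs Ch j) (Hs Ch k)),
      (forall i, (0 < LZ Ch i)%N),
      (forall i, (3 * LZ Ch i <= Ldom Ch i)%N)
    & [/\ (forall r s, domset r -> domset s -> phi Ch r = phi Ch s -> r = s),
      phi Ch 0 = gone gG
    & forall r s j, domset r -> domset s ->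
      let H := Hs Ch j in
      let ph := phi Ch in
      [/\ coset_eq gG H (ph r) (ph s) -> r = s,
          (forall z, Zset z -> domset (r + s + z)) ->
            exists2 z, Zset z &
              coset_eq gG H (gmul gG (ph r) (ph s)) (ph (r + s + z)),
          (forall z, Zset z -> domset (r - s + z)) ->
            exists2 z, Zset z &
              coset_eq gG H (gmul gG (ph r) (ginv gG (ph s))) (ph (r - s + z)),
          (forall z, Zset z -> domset (- r + s + z)) ->
            exists2 z, Zset z &
              coset_eq gG H (gmul gG (ginv gG (ph r)) (ph s)) (ph (- r + s + z))
        & (forall z, Zset z -> domset (- s + z)) ->
            exists2 z, Zset z &
              coset_eq gG H (ginv gG (ph s)) (ph (- s + z))]]].

Variables (X : Type) (ac : action_on gG X).

Definition in_XH (x : X) :=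
  exists j, forall g, stabilizer ac x g <-> Hs Ch j g.

Definition img_act (S : vec l Gam -> Prop) (x : X) : X -> Prop :=
  fun y => exists2 s, S s & y = act ac (phi Ch s) x.

(** R is (Phi, eps)-roughly A at x (including the standing requirements
    2.A in dom(phi), x in X^H, 0 < eps < 1). *)
Definition roughly (R : realType) (A : rect l) (x : X) (eps : R) (Rs : X -> Prop) :=
  [/\ (forall b, scaled_set (2 : R) A b -> domset b),
      in_XH x,
      0 < eps < 1,
      (forall i, ((2 * LZ Ch i)%N%:R : R) <= eps * (rL A i)%:R)
    & (forall y, img_act (scaled_set (1 - eps) A) x y -> Rs y)
      /\ (forall y, Rs y -> img_act (scaled_set (1 + eps) A) x y)].

End ChartDefs.

From HB Require Import structures.
From mathcomp Require Import all_boot all_order all_algebra.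
From mathcomp Require Import reals lra zify.
Import Order.TTheory GRing.Theory Num.Theory.
Local Open Scope ring_scope.

(* Both parts concern a point y at chart offset d from x (d = u, resp. d = -v):
   by the chart axioms, phi(s).y = phi(s + d + z).x and phi(t).x = phi(t - d + z').y
   with z, z' in Z.  So the inner and outer boxes of R around x, shifted by -d,
   are inner and outer boxes around y up to an error in Z, and 2.Z [= eps.A lets
   the margin eps -> 2 eps absorb that error.  The hypothesis (M+2).A + 4.Z in
   dom(phi) keeps every point met along the way in the domain of the chart. *)

Section Rectangles.
Context {R : realType} {l : nat} {Gam : finZmodType}.
Implicit Types (A : rect l) (a b d w z : vec l Gam) (L : 'I_l -> nat).

Lemma scaled_set_natE n A b :
  scaled_set (n%:R : R) A b <-> forall i, `|b.1 i - rc A i| <= (n * rL A i)%N%:Z.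
Proof.
rewrite /scaled_set; split=> h i; move: (h i);
by rewrite -natrM normr_nat pmulrn ler_int.
Qed.

Lemma scaled_set_le {lam mu : R} {A b} :
  scaled_set lam A b -> 0 <= lam -> lam <= mu -> scaled_set mu A b.
Proof.
move=> h lam0 lam_mu i; apply: (le_trans (h i)).
rewrite !ger0_norm ?mulr_ge0 //; last exact: le_trans lam_mu.
exact: ler_wpM2r.
Qed.

Lemma scaled_set_shift (lam : R) A w b :
  scaled_set lam (rect_shift A w) b <-> scaled_set lam A (b - w).
Proof.
rewrite /scaled_set /=; split=> h i; move: (h i); rewrite !ffunE;
by rewrite opprD addrA [b.1 i - w.1 i - _]addrAC.
Qed.

Lemma scaled_set_add_rect {lam mu : R} {A L b z} :
  scaled_set lam A b -> rect_set (centered_rect L) z -> 0 <= lam ->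
  (forall i, lam * (rL A i)%:R + (L i)%:R <= mu * (rL A i)%:R) ->
  scaled_set mu A (b + z).
Proof.
move=> hb hz lam0 hL i.
have := hb i; rewrite [`|lam * _|]ger0_norm ?mulr_ge0 // => hbi.
have := hz i; rewrite /= ffunE subr0 -(ler_int R) intr_norm -pmulrn => hzi.
rewrite /= ffunE addrAC intr_norm intrD; apply: le_trans (ler_normD _ _) _.
apply: le_trans (ler_norm (mu * _)); apply: le_trans (hL i).
by apply: lerD; rewrite // -intr_norm.
Qed.

Lemma rect_radius_le n A L :
  (forall a, scaled_set (n%:R : R) A a -> rect_set (centered_rect L) a) ->
  forall i, `|rc A i| + (n * rL A i)%N%:Z <= (L i)%:Z.
Proof.
move=> hA i.
(* the corner of n.A farthest from the origin *)
pose k j := (n * rL A j)%N%:Z.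
pose a : vec l Gam := ([ffun j => rc A j + (if 0 <= rc A j then k j else - k j)], 0).
have /hA /(_ i) : scaled_set (n%:R : R) A a.
  by apply/scaled_set_natE => j; rewrite ffunE addrC addKr; case: ifP => _; rewrite /k; lia.
rewrite /= !ffunE subr0 /k; case: ifP; lia.
Qed.

Lemma scaled_shift_sub_rect {m n A L d} :
  (forall a, scaled_set ((m + n)%N%:R : R) A a -> rect_set (centered_rect L) a) ->
  scaled_set (m%:R : R) A d ->
  forall b, scaled_set (n%:R : R) (rect_shift A (- d)) b -> rect_set (centered_rect L) b.
Proof.
move=> /rect_radius_le hL /scaled_set_natE hd b /scaled_set_shift /scaled_set_natE hb i.
have hbi : `|b.1 i + d.1 i - rc A i| <= (n * rL A i)%N.
  by move: (hb i); rewrite /= !ffunE opprK.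
move: (hL i) (hd i) hbi; rewrite /= ffunE mulnDl subr0; lia.
Qed.

Lemma rect_set_centeredN L b :
  rect_set (centered_rect L) (- b) -> rect_set (centered_rect L) b.
Proof. by move=> h i; move: (h i); rewrite /= !ffunE !subr0 normrN. Qed.

End Rectangles.

Section GroupAction.
Variables (G : Type) (gG : group_on G) (X : Type) (ac : action_on gG X).

Lemma gmulrV a : gmul gG a (ginv gG a) = gone gG.
Proof.
have e : gmul gG (ginv gG (ginv gG a)) (ginv gG a) = gone gG by rewrite gmulV.
rewrite -{1}(gmul1 gG (gmul gG a (ginv gG a))) -{1}e.
by rewrite -gmulA (gmulA gG (ginv gG a)) gmulV gmul1.
Qed.

Lemma act_ginvK g x : act ac (ginv gG g) (act ac g x) = x.
Proof. by rewrite -actM gmulV act1. Qed.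

Lemma act_coset (H : G -> Prop) x a b :
  (forall g, H g -> stabilizer ac x g) -> coset_eq gG H a b ->
  act ac a x = act ac b x.
Proof.
move=> hH /hH hst.
have -> : a = gmul gG b (gmul gG (ginv gG b) a) by rewrite gmulA gmulrV gmul1.
by rewrite actM hst.
Qed.

End GroupAction.

Definition chart_shift {G : Type} {gG : group_on G} {l : nat} {Gam : finZmodType}
    (Ch : chart G l Gam) {X : Type} (ac : action_on gG X) (x y : X) (d : vec l Gam) :=
  forall s, domset Ch s -> (forall z, Zset Ch z -> domset Ch (s + d + z)) ->
  exists2 z, Zset Ch z & act ac (phi Ch s) y = act ac (phi Ch (s + d + z)) x.

Section ChartShift.
Context {G : Type} {gG : group_on G} {l : nat} {Gam : finZmodType}.
Context {Ch : chart G l Gam} {X : Type} {ac : action_on gG X}.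

Hypothesis hCh : is_chart gG Ch.

Lemma chart_shift_act {x y u} :
  in_XH Ch ac x -> domset Ch u -> y = act ac (phi Ch u) x -> chart_shift Ch ac x y u.
Proof.
case=> j hj du -> s ds hdom.
have [_ _ _ _ [_ _ hch]] := hCh.
have [_ hmul _ _ _] := hch s u j ds du.
have [z hz hc] := hmul hdom.
exists z => //; rewrite -actM; apply: act_coset hc => g; exact: (hj g).2.
Qed.

Lemma chart_shift_act_inv {x y u} :
  in_XH Ch ac y -> domset Ch u -> y = act ac (phi Ch u) x -> chart_shift Ch ac y x (- u).
Proof.
case=> k hk du hyx s ds hdom.
have [_ _ _ _ [_ _ hch]] := hCh.
have [_ _ hdiv _ _] := hch s u k ds du.
have [z hz hc] := hdiv hdom.
have -> : x = act ac (ginv gG (phi Ch u)) y by rewrite hyx act_ginvK.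
exists z => //; rewrite -actM; apply: act_coset hc => g; exact: (hk g).2.
Qed.

Lemma roughly_shift {R : realType} {A : rect l} {Rs : X -> Prop} {x y d} {eps : R} :
  eps < 1 / 2 -> roughly Ch ac A x eps Rs ->
  (forall b, scaled_set (2 : R) (rect_shift A (- d)) b -> domset Ch b) ->
  in_XH Ch ac y -> chart_shift Ch ac x y d -> chart_shift Ch ac y x (- d) ->
  roughly Ch ac (rect_shift A (- d)) y (2 * eps) Rs.
Proof.
move=> eps_half [dom2A _ /andP[eps0 _] hZ [inR outR]] dom2Ad hy hxy hyx.
have ZA i : 2 * ((LZ Ch i)%:R : R) <= eps * (rL A i)%:R by rewrite -natrM.
have epsL i : 0 <= eps * ((rL A i)%:R : R) by rewrite mulr_ge0 // ltW.
split=> [||||]; [exact: dom2Ad | exact: hy | | | split].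
- by apply/andP; split; lra.
- by move=> i /=; rewrite natrM; have := ZA i; have := epsL i; lra.
- move=> _ [s hs ->].
  have hsd : scaled_set (1 - 2 * eps) A (s + d).
    by move/scaled_set_shift: hs; rewrite opprK.
  have inner z : Zset Ch z -> scaled_set (1 - eps) A (s + d + z).
    move=> hz; apply: (scaled_set_add_rect hsd hz); first lra.
    by move=> i; have := ZA i; have := epsL i; lra.
  have s_dom : domset Ch s by apply: dom2Ad (scaled_set_le hs _ _); lra.
  have inner_dom z : Zset Ch z -> domset Ch (s + d + z).
    by move=> hz; apply: dom2A (scaled_set_le (inner z hz) _ _); lra.
  have [z hz ->] := hxy s s_dom inner_dom.
  by apply: inR; exists (s + d + z); first exact: inner.
- move=> _ /outR [t ht ->].
  have outer z : Zset Ch z -> scaled_set (1 + 2 * eps) (rect_shift A (- d)) (t - d + z).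
    move=> hz; apply/scaled_set_shift; rewrite opprK addrAC subrK.
    apply: (scaled_set_add_rect ht hz); first lra.
    by move=> i; have := ZA i; have := epsL i; lra.
  have t_dom : domset Ch t by apply: dom2A (scaled_set_le ht _ _); lra.
  have outer_dom z : Zset Ch z -> domset Ch (t - d + z).
    by move=> hz; apply: dom2Ad (scaled_set_le (outer z hz) _ _); lra.
  have [z hz ->] := hyx t t_dom outer_dom.
  by exists (t - d + z); first exact: outer.
Qed.

End ChartShift.

Theorem lemma5p2 (R : realType) (G : Type) (gG : group_on G)
  (Gcount : countable_type G) (X : Type) (ac : action_on gG X)
  (l : nat) (Gam : finZmodType) (Ch : chart G l Gam) (hCh : is_chart gG Ch)
  (eps : R) (heps0 : 0 < eps) (heps1 : eps < 1 / 2)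
  (A : rect l) (Rs : X -> Prop) (x : X)
  (hR : roughly Ch ac A x eps Rs)
  (M : nat) (hM : (0 < M)%N)
  (hdom : forall a z, scaled_set ((M + 2)%N%:R : R) A a -> scaled_set (4 : R) (centered_rect (LZ Ch)) z ->
            domset Ch (a + z : vec l Gam))
  (y : X) (hy : in_XH Ch ac y) :
  (forall u : vec l Gam, scaled_set (M%:R : R) A u -> y = act ac (phi Ch u) x ->
     roughly Ch ac (rect_shift A (- u)) y (2 * eps) Rs) /\
  (forall v : vec l Gam, scaled_set (M%:R : R) A (- v) -> x = act ac (phi Ch v) y ->
     roughly Ch ac (rect_shift A v) y (2 * eps) Rs).
Proof.
have hx : in_XH Ch ac x by case: hR.
have dom_MA2 a : scaled_set ((M + 2)%N%:R : R) A a -> domset Ch a.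
  move=> ha; rewrite -[a]addr0; apply: hdom ha _ => i.
  by rewrite /= ffunE subrr normr0 mulr0z normr_ge0.
have dom_MA d : scaled_set (M%:R : R) A d -> domset Ch d.
  by move=> hd; apply: dom_MA2 (scaled_set_le hd _ _); rewrite ?ler0n // ler_nat leq_addr.
have dom_shift d := scaled_shift_sub_rect (n := 2) (d := d) dom_MA2.
split=> [u hu hyu | v hv hxv].
- apply: (roughly_shift heps1 hR (dom_shift u hu) hy).
    exact: (chart_shift_act hCh hx (dom_MA u hu) hyu).
  exact: (chart_shift_act_inv hCh hy (dom_MA u hu) hyu).
- have dv : domset Ch v by apply/rect_set_centeredN/dom_MA.
  rewrite -[v in rect_shift A v]opprK.
  apply: (roughly_shift heps1 hR (dom_shift (- v) hv) hy).
    exact: (chart_shift_act_inv hCh hx dv hxv).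
  by rewrite opprK; exact: (chart_shift_act hCh hy dv hxv).
Qed.
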